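(* Let $n\ge 2$, $K\ge 1$ and $\lambda_-<\lambda_+$ in $(-1,1)$. The set $\mathcal{G}_{\lambda_-,\lambda_+}$ is non-convex.
   Context: $\mathcal{W}_{\lambda_-,\lambda_+}$ denotes the set of symmetric matrices $W\in\mathbb{R}^{n\times n}$ with $\lambda_1(W)=1$ with eigenvector $\mathbf{1}/\sqrt{n}$ and $\lambda_-\le\lambda_n(W)\le\dots\le\lambda_2(W)\le\lambda_+$. $\mathcal{G}_{\lambda_-,\lambda_+}$ is the set of all symmetric positive semidefinite matrices of the form $G_c=\begin{bmatrix}P_x^TP_x & P_x^TP_y\\ P_y^TP_x & P_y^TP_y\end{bmatrix}$, where for some dimension $d\ge1$, $P_x=[x_1^1\dots x_n^1\dots x_1^K\dots x_n^K]\in\mathbb{R}^{d\times nK}$ and $P_y=[y_1^1\dots y_n^1\dots y_1^K\dots y_n^K]\in\mathbb{R}^{d\times nK}$, such that there exists $W\in\mathcal{W}_{\lambda_-,\lambda_+}$ with $\mathbf{y}^k=(W\otimes I_d)\mathbf{x}^k$ for all $k=1,\dots,K$, where $\mathbf{x}^k=(x_1^k,\dots,x_n^k)\in\mathbb{R}^{nd}$ and similarly for $\mathbf{y}^k$. *)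

From HB Require Import structures.
From mathcomp Require Import all_boot all_order all_algebra.
From mathcomp Require Import reals.
Set Implicit Arguments. Unset Strict Implicit. Unset Printing Implicit Defensive.
Import Order.TTheory GRing.Theory Num.Theory.
Local Open Scope ring_scope.

(* W_{lm,lp}: symmetric n x n real matrices W with W 1 = 1 (eigenvalue
   lambda_1(W) = 1 with eigenvector 1/sqrt n) and whose remaining eigenvalues
   lambda_2 >= ... >= lambda_n (listed with multiplicity, i.e. as the remaining
   roots of the characteristic polynomial) all lie in [lm, lp]. *)
Definition inW (R : realType) (n : nat) (lm lp : R) (W : 'M[R]_n) : Prop :=
  W^T = W /\
  W *m const_mx 1 = (const_mx 1 : 'cV[R]_n) /\
  exists mu : 'I_n.-1 -> R,
    char_poly W = ('X - 1%:P) * \prod_(i < n.-1) ('X - (mu i)%:P) /\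
    (forall i, lm <= mu i <= lp).

(* G_{lm,lp}: Gram matrices [Px Py]^T [Px Py] where the columns of Px are
   x_1^1..x_n^1 .. x_1^K..x_n^K (column of x_i^k has index k*n+i, i.e.
   mxvec_index k i), and y^k = (W (x) I_d) x^k, i.e.
   y_i^k = sum_j W_ij x_j^k, for some W in W_{lm,lp} and some d >= 1. *)
Definition Gset (R : realType) (n K : nat) (lm lp : R)
    (G : 'M[R]_(K * n + K * n)) : Prop :=
  exists d : nat, (0 < d)%N /\
  exists (Px Py : 'M[R]_(d, K * n)) (W : 'M[R]_n),
    inW lm lp W /\
    (forall (k : 'I_K) (i : 'I_n),
        col (mxvec_index k i) Py =
        \sum_(j < n) W i j *: col (mxvec_index k j) Px) /\
    G = block_mx (Px^T *m Px) (Px^T *m Py) (Py^T *m Px) (Py^T *m Py).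

Definition convex_mxset (R : realType) (m : nat) (S : 'M[R]_m -> Prop) : Prop :=
  forall (A B : 'M[R]_m) (t : R), S A -> S B -> 0 <= t <= 1 ->
    S (t *: A + (1 - t) *: B).

From HB Require Import structures.
From mathcomp Require Import all_boot all_order all_algebra.
From mathcomp Require Import reals.
From mathcomp Require Import ring lra.
Set Implicit Arguments. Unset Strict Implicit. Unset Printing Implicit Defensive.
Import Order.TTheory GRing.Theory Num.Theory.
Local Open Scope ring_scope.

(* For a in [lm, lp] the matrix W_a = a I + (1 - a)/n 11^T lies in W_{lm,lp}
   (eigenvalue 1 on the all-ones vector, a on its orthogonal complement), so
   P_x = I, P_y = P_x (I_K (x) W_a) gives a point G_a of the set.  If some G in
   the set has top-left block P_x^T P_x = I, the columns of P_y lie in the span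
   of the orthonormal columns of P_x, so its bottom-right block is B^T B where
   B is its top-right block.  At the midpoint of G_lm and G_lp this equation
   reads ((B1 + B2)/2)^T ((B1 + B2)/2) = (B1^T B1 + B2^T B2)/2, and the defect
   of convexity t A^T A + (1-t) B^T B - (tA + (1-t)B)^T (tA + (1-t)B) is
   t(1-t) (A-B)^T (A-B); hence B1 = B2, which forces lm = lp. *)

Lemma char_poly_scalar (R : comNzRingType) n (a : R) :
  char_poly (a%:M : 'M_n) = ('X - a%:P) ^+ n.
Proof. by rewrite /char_poly /char_poly_mx map_scalar_mx -raddfB det_scalar. Qed.

Lemma char_poly_lblock (R : comNzRingType) m n
    (A : 'M[R]_m) (C : 'M_(n, m)) (D : 'M_n) :
  char_poly (block_mx A 0 C D) = char_poly A * char_poly D.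
Proof.
rewrite /char_poly /char_poly_mx map_block_mx map_mx0 (scalar_mx_block m n).
by rewrite opp_block_mx add_block_mx oppr0 addr0 det_lblock.
Qed.

Lemma char_poly_similar (F : fieldType) n (S A B : 'M[F]_n) :
  S \in unitmx -> A *m S = S *m B -> char_poly A = char_poly B.
Proof.
move=> S_unit AS_SB.
have S_neq0 : \det (map_mx (@polyC F) S) != 0.
  by rewrite det_map_mx polyC_eq0 -unitfE -unitmxE.
apply: (mulIf S_neq0); rewrite -det_mulmx mulrC -det_mulmx /char_poly_mx.
by rewrite mulmxBl mulmxBr -!map_mxM AS_SB mul_scalar_mx mul_mx_scalar.
Qed.

Lemma mul_const_mx (R : pzSemiRingType) m p q (a b : R) :
  (const_mx a : 'M_(m, p)) *m (const_mx b : 'M_(p, q)) = const_mx (a * b *+ p).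
Proof.
apply/matrixP => i j; rewrite !mxE.
by under eq_bigr do rewrite !mxE; rewrite sumr_const card_ord.
Qed.

Section MixMatrix.
Variable R : realFieldType.

Definition mix_mx n (a : R) : 'M[R]_n := a%:M + const_mx ((1 - a) / n%:R).

Lemma mix_mx_tr n a : (mix_mx n a)^T = mix_mx n a.
Proof. by rewrite linearD /= tr_scalar_mx trmx_const. Qed.

Lemma mix_mx_offdiag n a i j : i != j -> mix_mx n a i j = (1 - a) / n%:R.
Proof. by move=> /negPf ne_ij; rewrite !mxE ne_ij mulr0n add0r. Qed.

Lemma mix_mx_inj n : (1 < n)%N -> injective (@mix_mx n).
Proof.
move=> n_gt1 a b.
move=> /(congr1 (fun W : 'M_n => W (Ordinal (ltnW n_gt1)) (Ordinal n_gt1))).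
rewrite !mix_mx_offdiag // => /mulIf; rewrite invr_eq0 pnatr_eq0 -lt0n ltnW //.
by move=> /(_ isT) /subrI.
Qed.

Lemma mix_mx_const1 n a :
  (0 < n)%N -> mix_mx n a *m const_mx 1 = (const_mx 1 : 'cV[R]_n).
Proof.
move=> n_gt0; rewrite mulmxDl mul_scalar_mx mul_const_mx scalemx_const.
apply/matrixP => i j; rewrite !mxE !mulr1 -mulr_natr mulfVK.
  by rewrite addrC subrK.
by rewrite pnatr_eq0 -lt0n.
Qed.

Section CharPoly.
Variables (n : nat) (a : R).
Let c := (1 - a) / (1 + n)%:R.

Lemma mix_mx_block :
  mix_mx (1 + n) a
  = block_mx (a%:M + const_mx c) (const_mx c) (const_mx c) (a%:M + const_mx c).
Proof.
rewrite /mix_mx (scalar_mx_block 1 n) -[const_mx _ in LHS]block_mx_const.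
by rewrite add_block_mx !add0r.
Qed.

Let S : 'M[R]_(1 + n) := block_mx 1%:M (const_mx 1) 0 1%:M.

Lemma lblock_mul_mix_mx :
  block_mx 1%:M 0 (const_mx c) a%:M *m S = S *m mix_mx (1 + n) a.
Proof.
rewrite mix_mx_block /S !mulmx_block.
rewrite !mul1mx !mul0mx !mulmx1 !mulmx0 !addr0 !add0r.
rewrite !mulmxDr !mul_const_mx mul_mx_scalar scalemx_const.
have c_sum : a + c *+ (1 + n) = 1.
  by rewrite /c -mulr_natr mulfVK ?pnatr_eq0 // addrC subrK.
congr block_mx; apply/matrixP => i j; rewrite !mxE ?ord1 /=; lra.
Qed.

Lemma char_poly_mix_mx :
  char_poly (mix_mx n.+1 a) = ('X - 1%:P) * ('X - a%:P) ^+ n.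
Proof.
have S_unit : S \in unitmx by rewrite unitmxE det_ublock !det1 mul1r unitr1.
rewrite -(char_poly_similar S_unit lblock_mul_mix_mx) char_poly_lblock.
by rewrite !char_poly_scalar expr1.
Qed.

End CharPoly.
End MixMatrix.

Section LinMulmxr.
Variable R : comNzRingType.

Lemma lin_mulmxrE m n p (B : 'M[R]_(n, p)) (k k' : 'I_m) j i :
  lin_mulmxr B (mxvec_index k j) (mxvec_index k' i) = (k' == k)%:R * B j i.
Proof.
rewrite !mxE /= vec_mx_delta mxvecE mxE (bigD1 j) //=.
rewrite big1 => [|l /negPf ne_lj].
  by rewrite !mxE eqxx andbT addr0.
by rewrite !mxE ne_lj andbF mul0r.
Qed.

Lemma lin_mulmxr_inj m n p : (0 < m)%N -> injective (@lin_mulmxr R m n p).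
Proof.
move=> m_gt0 B1 B2 eqB; apply/matrixP => j i.
pose k0 := Ordinal m_gt0.
have := congr1 (fun L : 'M_(m * n, m * p) =>
                  L (mxvec_index k0 j) (mxvec_index k0 i)) eqB.
by rewrite /= !lin_mulmxrE eqxx !mul1r.
Qed.

Lemma col_mul_lin_mulmxr d m n (P : 'M[R]_(d, m * n)) (W : 'M_n) k i :
  col (mxvec_index k i) (P *m lin_mulmxr W^T)
    = \sum_(j < n) W i j *: col (mxvec_index k j) P.
Proof.
apply/colP => r; rewrite [LHS]mxE.
have -> : (P *m lin_mulmxr W^T) r (mxvec_index k i)
          = (row r P *m lin_mulmxr W^T) 0 (mxvec_index k i).
  by rewrite -row_mul [RHS]mxE.
rewrite /lin_mulmxr mul_rV_lin /= mxvecE mxE summxE.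
by apply: eq_bigr => j _; rewrite !mxE mulrC.
Qed.

Lemma mulmx_lin_mulmxrP d m n (Px Py : 'M[R]_(d, m * n)) (W : 'M_n) :
  (forall k i, col (mxvec_index k i) Py
                 = \sum_(j < n) W i j *: col (mxvec_index k j) Px) ->
  Py = Px *m lin_mulmxr W^T.
Proof.
move=> colPy; apply/matrixP => r c; case/mxvec_indexP: c => k i.
have := congr1 (fun v : 'cV_d => v r 0) (colPy k i).
by rewrite -col_mul_lin_mulmxr !mxE.
Qed.

End LinMulmxr.

Lemma trmx_mul_self_eq0 (R : realDomainType) m n (M : 'M[R]_(m, n)) :
  M^T *m M = 0 -> M = 0.
Proof.
move=> MtM0; apply/matrixP => i j; rewrite mxE.
have /eqP := congr1 (fun A : 'M_n => A j j) MtM0; rewrite !mxE.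
under eq_bigr do rewrite mxE -expr2.
rewrite psumr_eq0 => [|k _]; last exact: sqr_ge0.
move=> /allP /(_ i (mem_index_enum _)) /=.
by rewrite sqrf_eq0 => /eqP.
Qed.

Lemma gram_convex_defect (R : comNzRingType) m n
    (A B : 'M[R]_(m, n)) (t : R) :
  t *: (A^T *m A) + (1 - t) *: (B^T *m B)
    - (t *: A + (1 - t) *: B)^T *m (t *: A + (1 - t) *: B)
  = (t * (1 - t)) *: ((A - B)^T *m (A - B)).
Proof.
apply/matrixP => i j; rewrite !mxE !mulr_sumr -big_split -sumrB /=.
by apply: eq_bigr => k _; rewrite !mxE; ring.
Qed.

Lemma gram_convex_eq (R : realFieldType) m n (A B : 'M[R]_(m, n)) t :
  0 < t < 1 ->
  (t *: A + (1 - t) *: B)^T *m (t *: A + (1 - t) *: B)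
    = t *: (A^T *m A) + (1 - t) *: (B^T *m B) -> A = B.
Proof.
move=> t01 gramE; apply/eqP; rewrite -subr_eq0; apply/eqP/trmx_mul_self_eq0.
have /eqP := gram_convex_defect A B t; rewrite -gramE subrr eq_sym scalemx_eq0.
have -> : (t * (1 - t) == 0) = false by apply/negbTE; rewrite mulf_neq0 //; lra.
by move/eqP.
Qed.

Lemma inW_mix_mx (R : realType) n (lm lp a : R) :
  lm <= a <= lp -> inW lm lp (mix_mx n.+1 a).
Proof.
move=> a_in; split; first exact: mix_mx_tr.
split; first exact: mix_mx_const1.
exists (fun=> a); split=> //.
by rewrite char_poly_mix_mx prodr_const card_ord.
Qed.

Lemma Gset_lin_mulmxr (R : realType) n K (lm lp : R) (W : 'M[R]_n) :
  (0 < K * n)%N -> inW lm lp W ->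
  let L := @lin_mulmxr R K n n W^T in
  Gset lm lp (block_mx 1%:M L L^T (L^T *m L)).
Proof.
move=> Kn_gt0 W_in L; exists (K * n)%N; split=> //.
exists 1%:M, L, W; split=> //; split.
  by move=> k i; rewrite -[L]mul1mx col_mul_lin_mulmxr.
by rewrite trmx1 !mul1mx mulmx1.
Qed.

Lemma Gset_gram (R : realType) n K (lm lp : R) (G : 'M[R]_(K * n + K * n)) :
  Gset lm lp G -> ulsubmx G = 1%:M -> drsubmx G = (ursubmx G)^T *m ursubmx G.
Proof.
case=> d [_ [Px [Py [W [_ [colPy ->]]]]]].
rewrite block_mxKul block_mxKur block_mxKdr => PxPx1.
rewrite (mulmx_lin_mulmxrP colPy) [Px^T *m (Px *m _)]mulmxA PxPx1 mul1mx.
by rewrite trmx_mul -mulmxA [Px^T *m (Px *m _)]mulmxA PxPx1 mul1mx.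
Qed.

Theorem lemma1 (R : realType) (n K : nat) (lm lp : R) :
  (2 <= n)%N -> (1 <= K)%N -> -1 < lm -> lm < lp -> lp < 1 ->
  ~ convex_mxset (@Gset R n K lm lp).
Proof.
case: n => // n n_ge2 K_gt0 _ lm_lt_lp _ convG.
pose L a := @lin_mulmxr R K n.+1 n.+1 (mix_mx n.+1 a)^T.
pose G a := block_mx 1%:M (L a) (L a)^T ((L a)^T *m L a).
have G_in a : lm <= a <= lp -> Gset lm lp (G a).
  move=> a_in; apply: Gset_lin_mulmxr; last exact: inW_mix_mx.
  by rewrite muln_gt0 K_gt0.
have half01 : 0 < (2^-1 : R) < 1 by lra.
have lm_in : lm <= lm <= lp by rewrite lexx ltW.
have lp_in : lm <= lp <= lp by rewrite lexx ltW.
have := convG _ _ 2^-1 (G_in _ lm_in) (G_in _ lp_in) ltac:(lra).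
rewrite /G !scale_block_mx add_block_mx => /Gset_gram.
rewrite block_mxKul block_mxKur block_mxKdr -scalerDl addrC subrK scale1r.
move=> /(_ erefl) /esym /(gram_convex_eq half01).
move=> /(lin_mulmxr_inj K_gt0) /trmx_inj /(mix_mx_inj n_ge2) /eqP.
by rewrite lt_eqF.
Qed.
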